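(* If $\mathscr{S}$ is a relaxed scenario, then $G_{=}(\mathscr{S})$ contains no induced cycle on $5$ vertices and no induced cycle on $\ell$ vertices for any $\ell\geq 7$. In particular, $G_{=}(\mathscr{S})$ is odd-hole free (contains no induced cycle of odd length greater than three).
   Context: All trees are planted phylogenetic trees: a tree $T$ has a distinguished vertex $0_T$ of degree $1$ whose unique neighbor $\rho_T$ is the root, and every vertex other than $0_T$ and the leaves $L(T)$ has at least two children. For $x,y\in V(T)$ write $y\preceq_T x$ if $x$ lies on the path from $0_T$ to $y$; edges are written $uv$ with $v\prec_T u$. $\mathrm{lca}_T$ denotes the last common ancestor. A time map for $T$ is $\tau_T\colon V(T)\to\mathbb{R}$ with $\tau_T(x)<\tau_T(y)$ whenever $x\prec_T y$. A relaxed scenario $\mathscr{S}=(T,S,\sigma,\mu,\tau_T,\tau_S)$ consists of a gene tree $T$ with time map $\tau_T$, a species tree $S$ with time map $\tau_S$, a map $\sigma\colon L(T)\to M$ with $M\subseteq L(S)$, and a map $\mu\colon V(T)\to V(S)\cup E(S)$ such that (S0) $\mu(x)=0_S$ iff $x=0_T$; (S1) $\mu(x)\in L(S)$ iff $x\in L(T)$, in which case $\mu(x)=\sigma(x)$; (S2) if $\mu(x)\in V(S)$ then $\tau_S(\mu(x))=\tau_T(x)$; (S3) if $\mu(x)=uv\in E(S)$ then $\tau_S(v)<\tau_T(x)<\tau_S(u)$. The EDT graph $G_{=}(\mathscr{S})$ has vertex set $L(T)$ and an edge $xy$ ($x\ne y$) iff $\tau_T(\mathrm{lca}_T(x,y))=\tau_S(\mathrm{lca}_S(\sigma(x),\sigma(y)))$.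 *)

From mathcomp Require Import all_boot all_order all_algebra.
Set Implicit Arguments. Unset Strict Implicit. Unset Printing Implicit Defensive.
Import Order.TTheory GRing.Theory Num.Theory.

(* A planted tree on a finite vertex type V is given by its planted vertex o
   (= 0_T) and a parent map par; par o = o by convention.  Every vertex
   reaches o by iterating par, so the graph {x, par x} (x <> o) is a tree. *)

Section Trees.
Variable V : finType.
Variables (o : V) (par : V -> V).

Definition children (x : V) : {set V} := [set y | (y != o) && (par y == x)].

Definition is_leaf (x : V) : Prop := x <> o /\ children x = set0.

(* y \preceq_T x : x lies on the path from 0_T to y *)
Definition anc (x y : V) : Prop := exists k : nat, iter k par y = x.

Definition sanc (x y : V) : Prop := anc x y /\ x <> y.

Definition planted_phylo : Prop :=
  [/\ par o = o,
      (forall x, anc o x),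
      #|children o| = 1 &
      (forall x, x <> o -> children x <> set0 -> 2 <= #|children x|)].

Definition is_lca (x y z : V) : Prop :=
  anc z x /\ anc z y /\ (forall w, anc w x -> anc w y -> anc w z).

Definition time_map (R : realDomainType) (tau : V -> R) : Prop :=
  forall x y, sanc x y -> (tau y < tau x)%R.
End Trees.

(* Relaxed scenario.  mu x = inl v means mu(x) = v in V(S);
   mu x = inr v means mu(x) is the edge (parS v) v of S (requires v <> 0_S). *)
Definition relaxed_scenario (R : realDomainType) (VT VS : finType)
  (oT : VT) (parT : VT -> VT) (oS : VS) (parS : VS -> VS)
  (sigma : VT -> VS) (mu : VT -> VS + VS) (tauT : VT -> R) (tauS : VS -> R)
  : Prop :=
  planted_phylo oT parT /\ planted_phylo oS parS /\
  time_map parT tauT /\ time_map parS tauS /\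
  (forall x, is_leaf oT parT x -> is_leaf oS parS (sigma x)) /\
  (forall x v, mu x = inr v -> v <> oS) /\
  (forall x, mu x = inl oS <-> x = oT) /\
  (forall x, (exists l, mu x = inl l /\ is_leaf oS parS l) <-> is_leaf oT parT x) /\
  (forall x, is_leaf oT parT x -> mu x = inl (sigma x)) /\
  (forall x v, mu x = inl v -> tauS v = tauT x) /\
  (forall x v, mu x = inr v -> (tauS v < tauT x)%R /\ (tauT x < tauS (parS v))%R).

Definition edt_edge (R : realDomainType) (VT VS : finType)
  (oT : VT) (parT : VT -> VT) (oS : VS) (parS : VS -> VS)
  (sigma : VT -> VS) (tauT : VT -> R) (tauS : VS -> R) (x y : VT) : Prop :=
  is_leaf oT parT x /\ is_leaf oT parT y /\ x <> y /\
  exists zT zS, is_lca parT x y zT /\ is_lca parS (sigma x) (sigma y) zS /\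
                tauT zT = tauS zS.

Definition has_induced_cycle (V : finType) (L : V -> Prop) (E : V -> V -> Prop)
  (l : nat) : Prop :=
  exists f : 'I_l -> V,
    injective f /\ (forall i, L (f i)) /\
    (forall i j, i <> j ->
       (E (f i) (f j) <-> (val j = (val i).+1 %% l \/ val i = (val j).+1 %% l))).

From mathcomp Require Import all_boot all_order all_algebra.
From mathcomp Require Import reals boolp zify.
Set Implicit Arguments. Unset Strict Implicit. Unset Printing Implicit Defensive.
Import Order.TTheory GRing.Theory Num.Theory.

(* For leaves x, y of T let a(x,y) be the time of lca_T(x,y) and b(x,y) the
   time of lca_S(sigma x, sigma y).  Both satisfy the strong triangle
   inequality, and xy is an edge of G_= exactly when a(x,y) = b(x,y).  On an
   induced cycle the edges force a and b to have the same maximum M over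
   distinct pairs, since otherwise the path through all vertices would keep the
   larger one strictly below its own maximum.  The pairs with a < M, resp.
   b < M, form two equivalence relations.  A pair below M for both would
   generate a class that is a nontrivial module of the cycle, which does not
   exist on at least 5 vertices; so every non-edge lies in exactly one of the
   two relations and the edges are the pairs in neither.  But the complement of
   C_5, and that of C_l (l >= 7) restricted to the vertices 0, 2, 4, 5, is not
   an edge-disjoint union of two disjoint unions of cliques. *)

(* Neither [d x x = 0] nor symmetry is required: for [tau (lca x x)], [d x x]
   is the time of the leaf [x]. *)
Definition ultrametric (T : Type) (R : realDomainType) (d : T -> T -> R) :=
  forall x y z, (d x z <= Num.max (d x y) (d y z))%R.

Section Ancestry.
Variables (V : finType) (par : V -> V).

Lemma anc_trans x y z : anc par x y -> anc par y z -> anc par x z.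
Proof. by move=> [k <-] [m <-]; exists (k + m); rewrite iterD. Qed.

Lemma anc_total x y z : anc par x z -> anc par y z -> anc par x y \/ anc par y x.
Proof.
move=> [k <-] [m <-]; case: (leqP k m) => [km|mk].
  by right; exists (m - k); rewrite -iterD subnK.
by left; exists (k - m); rewrite -iterD subnK // ltnW.
Qed.

Lemma lca_sym x y z : is_lca par x y z -> is_lca par y x z.
Proof. by move=> [zx [zy z_min]]; do 2 split=> //; move=> w wy wx; exact: z_min. Qed.

Lemma lca_exists o : (forall x, anc par o x) -> forall x y, exists z, is_lca par x y z.
Proof.
move=> o_root x y; have [K oK] := o_root x.
have : exists k, `[< anc par (iter k par x) y >] by exists K; apply/asboolP; rewrite oK.
case/ex_minnP=> m /asboolP my m_min.
exists (iter m par x); split; first by exists m.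
split=> // _ [j <-] jy; case: (leqP m j) => [mj|jm].
  by exists (j - m); rewrite -iterD subnK.
by have := m_min j (asboolT jy); rewrite leqNgt jm.
Qed.

Lemma lca_fun_exists o : (forall x, anc par o x) ->
  exists L : V -> V -> V, forall x y, is_lca par x y (L x y).
Proof.
move=> o_root; apply: (fin_all_exists (P := fun x f => forall y, is_lca par x y (f y))) => x.
exact: fin_all_exists (lca_exists o_root x).
Qed.

Variables (R : realDomainType) (tau : V -> R).
Hypothesis tau_time : time_map par tau.

Lemma time_anc x y : anc par x y -> (tau y <= tau x)%R.
Proof.
move=> xy; have [-> //|neq] := eqVneq x y.
by apply/ltW/tau_time; split=> //; exact/eqP.
Qed.

Lemma lca_time_uniq x y z z' : is_lca par x y z -> is_lca par x y z' -> tau z = tau z'.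
Proof.
move=> [zx [zy z_min]] [z'x [z'y z'_min]].
by apply/le_anti/andP; split; apply: time_anc; [exact: z_min | exact: z'_min].
Qed.

Section LcaFunction.
Variable L : V -> V -> V.
Hypothesis L_lca : forall x y, is_lca par x y (L x y).

Lemma lca_time_comm : commutative (fun x y => tau (L x y)).
Proof. by move=> x y; exact: lca_time_uniq (L_lca x y) (lca_sym (L_lca y x)). Qed.

Lemma lca_time_ultrametric : ultrametric (fun x y => tau (L x y)).
Proof.
move=> x y z; have [xy_x [xy_y _]] := L_lca x y; have [yz_y [yz_z _]] := L_lca y z.
have [_ [_ xz_min]] := L_lca x z.
rewrite le_max; apply/orP; case: (anc_total xy_y yz_y) => [above|above].
- by left; apply: time_anc; apply: xz_min => //; exact: anc_trans above yz_z.
- by right; apply: time_anc; apply: xz_min => //; exact: anc_trans above xy_x.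
Qed.

End LcaFunction.
End Ancestry.

Lemma edt_edgeE (R : realDomainType) (VT VS : finType) (oT : VT) (parT : VT -> VT)
    (oS : VS) (parS : VS -> VS) (sigma : VT -> VS) (tauT : VT -> R) (tauS : VS -> R)
    (LT : VT -> VT -> VT) (LS : VS -> VS -> VS) :
  time_map parT tauT -> time_map parS tauS ->
  (forall x y, is_lca parT x y (LT x y)) -> (forall x y, is_lca parS x y (LS x y)) ->
  forall x y, is_leaf oT parT x -> is_leaf oT parT y -> x <> y ->
  edt_edge oT parT oS parS sigma tauT tauS x y <->
  tauT (LT x y) = tauS (LS (sigma x) (sigma y)).
Proof.
move=> timeT timeS LT_lca LS_lca x y x_leaf y_leaf xy; split.
  move=> [_ [_ [_ [zT [zS [zT_lca [zS_lca eq_time]]]]]]].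
  by rewrite (lca_time_uniq timeT (LT_lca x y) zT_lca) (lca_time_uniq timeS (LS_lca _ _) zS_lca).
by move=> eq_time; do 3 split=> //; exists (LT x y), (LS (sigma x) (sigma y)).
Qed.

Section Ultrametrics.
Variable R : realDomainType.
Local Open Scope ring_scope.

Lemma ultrametric_lt_trans (T : Type) (d : T -> T -> R) c x y z :
  ultrametric d -> d x y < c -> d y z < c -> d x z < c.
Proof. by move=> d_ultra xy yz; rewrite (le_lt_trans (d_ultra x y z)) // gt_max xy. Qed.

Lemma ultrametric_path_lt (d : nat -> nat -> R) n c :
  ultrametric d -> commutative d -> (forall k, (k.+1 < n)%N -> d k k.+1 < c) ->
  forall i j, (i < n)%N -> (j < n)%N -> i != j -> d i j < c.
Proof.
move=> d_ultra dC step.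
have from0 k : (0 < k < n)%N -> d 0 k < c.
  elim: k => [//|[|k] IH] /andP[_ kn]; first exact: step.
  exact: ultrametric_lt_trans d_ultra (IH ltac:(lia)) (step _ kn).
move=> i j i_lt j_lt ij.
have [i0 | i0] := eqVneq i 0; first by rewrite i0; apply: from0; lia.
have [j0 | j0] := eqVneq j 0; first by rewrite j0 dC; apply: from0; lia.
by apply: (ultrametric_lt_trans (y := 0) d_ultra); [rewrite dC|]; apply: from0; lia.
Qed.

Lemma offdiag_max_exists (g : nat -> nat -> R) n : (1 < n)%N ->
  exists i j, [/\ (i < n)%N, (j < n)%N, i != j &
    forall k l, (k < n)%N -> (l < n)%N -> k != l -> g k l <= g i j].
Proof.
case: n => [|[|n]] // _.
pose P (p : 'I_n.+2 * 'I_n.+2) := val p.1 != val p.2.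
have [[i j] /= ij ij_max] := @arg_maxP _ _ _ (ord0, ord_max) P (fun p => g p.1 p.2) isT.
exists i, j; split=> // k l k_lt l_lt kl.
exact: (ij_max (Ordinal k_lt, Ordinal l_lt)).
Qed.

Lemma eq_below_maxE (M x y : R) : x <= M -> y <= M -> ~~ ((x < M) && (y < M)) ->
  x = y <-> ~~ (x < M) && ~~ (y < M).
Proof.
move=> xM yM not_both; split=> [xy | /andP[]]; first by move: not_both; rewrite -xy andbb => ->.
by rewrite -!leNgt => Mx My; apply/le_anti; rewrite (le_trans xM My) (le_trans yM Mx).
Qed.

End Ultrametrics.

Definition cycle_adj (n i j : nat) : Prop :=
  j = i.+1 \/ i = j.+1 \/ (i = 0 /\ j = n.-1) \/ (j = 0 /\ i = n.-1).

Lemma cycle_adjE n i j : 1 < n -> i < n -> j < n ->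
  (j = i.+1 %% n \/ i = j.+1 %% n) <-> cycle_adj n i j.
Proof.
move=> n_gt1 i_lt j_lt.
have succ_mod k : k < n -> k.+1 %% n = if k.+1 < n then k.+1 else 0.
  move=> k_lt; case: ltnP => [/modn_small //|k_ge].
  have -> : k.+1 = n by lia.
  by rewrite modnn.
by rewrite !succ_mod // /cycle_adj; do 2 case: ifP; lia.
Qed.

Lemma cycle_adj_sym n i j : cycle_adj n i j -> cycle_adj n j i.
Proof. rewrite /cycle_adj; lia. Qed.

Lemma cycle_adj_succ n k : cycle_adj n k k.+1.
Proof. by left. Qed.

Lemma pred_change_on_path n (K : pred nat) i w : i < n -> w < n -> K i -> ~~ K w ->
  exists2 k, k.+1 < n & K k != K k.+1.
Proof.
move=> i_lt w_lt Ki Kw.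
have : exists k, K k != K 0.
  by case K0: (K 0); [exists w; rewrite (negbTE Kw) | exists i; rewrite Ki].
case/ex_minnP=> m Km m_min.
have m_pos : 0 < m by case: m Km {m_min} => //; rewrite eqxx.
have m_lt : m < n.
  have [Ki0 | /m_min] := eqVneq (K i) (K 0); last by lia.
  have /m_min : K w != K 0 by rewrite -Ki0 Ki (negbTE Kw).
  lia.
exists m.-1; first by lia.
have [Kprev | /m_min] := eqVneq (K m.-1) (K 0); last by lia.
by rewrite prednK // Kprev eq_sym.
Qed.

Section LongCycle.
Variable n : nat.
Hypothesis n_gt4 : 4 < n.

Lemma cycle_no_triangle u v w : u < n -> v < n -> w < n ->
  cycle_adj n u v -> cycle_adj n v w -> cycle_adj n u w -> False.
Proof. rewrite /cycle_adj; lia. Qed.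

Lemma cycle_no_three_neighbours v i j k : v < n -> i < n -> j < n -> k < n ->
  i != j -> j != k -> i != k ->
  cycle_adj n v i -> cycle_adj n v j -> cycle_adj n v k -> False.
Proof. rewrite /cycle_adj; lia. Qed.

Lemma cycle_no_two_common_neighbours i j u v : i < n -> j < n -> u < n -> v < n ->
  i != j -> u != v ->
  cycle_adj n i u -> cycle_adj n i v -> cycle_adj n j u -> cycle_adj n j v -> False.
Proof. rewrite /cycle_adj; lia. Qed.

Lemma cycle_other_neighbour i w : i < n -> exists2 p, p < n & cycle_adj n i p /\ p != w.
Proof.
move=> i_lt; have [wi | wi] := eqVneq w (if i.+1 < n then i.+1 else 0).
  by exists (if 0 < i then i.-1 else n.-1); move: wi; do 2 case: ifP; rewrite /cycle_adj; lia.
by exists (if i.+1 < n then i.+1 else 0); move: wi; case: ifP; rewrite /cycle_adj; lia.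
Qed.

Lemma cycle_module_trivial (K : pred nat) i j w :
  i < n -> j < n -> w < n -> i != j -> K i -> K j -> ~~ K w ->
  (forall v k, v < n -> k < n -> ~~ K v -> K k -> cycle_adj n v k <-> cycle_adj n v i) ->
  False.
Proof.
move=> i_lt j_lt w_lt ij Ki Kj Kw module.
have [v [m [v_lt m_lt Kv Km vm]]] :
    exists v m, [/\ v < n, m < n, ~~ K v, K m & cycle_adj n v m].
  have [k k_lt] := pred_change_on_path i_lt w_lt Ki Kw.
  case Kk: (K k); case Kk1: (K k.+1) => // _.
  - by exists k.+1, k; split; rewrite ?Kk ?Kk1 //; [lia | exact: cycle_adj_sym (cycle_adj_succ _ _)].
  - by exists k, k.+1; split; rewrite ?Kk ?Kk1 //; [lia | exact: cycle_adj_succ].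
have vi : cycle_adj n v i := (module v m v_lt m_lt Kv Km).1 vm.
have vj : cycle_adj n v j := (module v j v_lt j_lt Kv Kj).2 vi.
have [p p_lt [ip pv]] := cycle_other_neighbour v i_lt.
have i_neq_p : i != p by move: ip; rewrite /cycle_adj; lia.
case Kp: (K p).
- have vp : cycle_adj n v p := (module v p v_lt p_lt Kv Kp).2 vi.
  have [pj | pj] := eqVneq p j.
    by apply: (cycle_no_triangle v_lt i_lt j_lt vi _ vj); rewrite -pj.
  by apply: (cycle_no_three_neighbours v_lt i_lt j_lt p_lt ij _ i_neq_p vi vj vp); rewrite eq_sym.
- have pj : cycle_adj n p j := (module p j p_lt j_lt (negbT Kp) Kj).2 (cycle_adj_sym ip).
  apply: (cycle_no_two_common_neighbours i_lt j_lt v_lt p_lt ij _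
    (cycle_adj_sym vi) ip (cycle_adj_sym vj) (cycle_adj_sym pj)).
  by rewrite eq_sym.
Qed.

End LongCycle.

Lemma cycle_complement_not_two_clusters n (A B : rel nat) :
  n = 5 \/ 7 <= n -> symmetric A -> symmetric B -> transitive A -> transitive B ->
  (forall i j, i < n -> j < n -> i != j ->
     (cycle_adj n i j <-> ~~ A i j && ~~ B i j) /\ ~~ (A i j && B i j)) ->
  False.
Proof.
move=> n57; have n_gt4 : 4 < n by lia.
wlog A02 : A B / A 0 2 => [main Asym Bsym Atr Btr split_AB | Asym Bsym Atr Btr split_AB].
  have [adj02 _] := split_AB 0 2 ltac:(lia) ltac:(lia) isT.
  have : ~~ (~~ A 0 2 && ~~ B 0 2) by apply/negP => /adj02; rewrite /cycle_adj; lia.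
  rewrite -negb_or negbK => /orP[A02 | B02]; first exact: main A02 Asym Bsym Atr Btr split_AB.
  apply: (main B A B02) => // i j i_lt j_lt ij.
  by rewrite andbC [B i j && _]andbC; exact: split_AB.
have nonadj i j : i < n -> j < n -> i != j -> ~ cycle_adj n i j -> B i j = ~~ A i j.
  move=> i_lt j_lt ij; have [-> disj] := split_AB i j i_lt j_lt ij.
  by case: (A i j) (B i j) disj => [] [].
have adjA i j : i < n -> j < n -> i != j -> cycle_adj n i j -> ~~ A i j.
  by move=> i_lt j_lt ij /(split_AB i j i_lt j_lt ij).1 /andP[].
have adjB i j : i < n -> j < n -> i != j -> cycle_adj n i j -> ~~ B i j.
  by move=> i_lt j_lt ij /(split_AB i j i_lt j_lt ij).1 /andP[].
rewrite /cycle_adj in nonadj adjA adjB.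
case: n57 => [n5 | n_ge7].
- have B24 : B 2 4.
    by rewrite nonadj ?(contra (Atr _ _ _ A02) (adjA 0 4 _ _ _ _)); lia.
  have A41 : A 4 1.
    have nB41 := contra (Btr _ _ _ B24) (adjB 2 1 _ _ _ _).
    by rewrite -[A 4 1]negbK -nonadj ?nB41; lia.
  have B13 : B 1 3.
    by rewrite nonadj ?(contra (Atr _ _ _ A41) (adjA 4 3 _ _ _ _)); lia.
  have A30 : A 3 0.
    have nB30 := contra (Btr _ _ _ B13) (adjB 1 0 _ _ _ _).
    by rewrite -[A 3 0]negbK -nonadj ?nB30; lia.
  by move/negP: (adjA 3 2 ltac:(lia) ltac:(lia) isT ltac:(lia)); apply; exact: Atr A02.
- have A0 k : k \in [:: 4; 5] -> A 0 k.
    rewrite !inE => k45; apply: contraT => nA0k.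
    have B0k : B 0 k by rewrite nonadj //; lia.
    case A2k: (A 2 k).
      by move: nA0k; rewrite (Atr _ _ _ A02 A2k).
    have : B 0 2 by apply: Btr B0k _; rewrite Bsym nonadj ?A2k //; lia.
    by rewrite nonadj ?A02 //; lia.
  by move/negP: (adjA 4 5 ltac:(lia) ltac:(lia) isT ltac:(lia)); apply;
    apply: Atr (A0 5 _) => //; rewrite Asym A0.
Qed.

Section EqualUltrametricsOnCycle.
Variables (R : realDomainType) (n : nat) (a b : nat -> nat -> R).
Hypothesis n57 : n = 5 \/ 7 <= n.
Hypotheses (a_ultra : ultrametric a) (b_ultra : ultrametric b).
Hypotheses (aC : commutative a) (bC : commutative b).
Hypothesis adj_eq :
  forall i j, i < n -> j < n -> i != j -> cycle_adj n i j <-> a i j = b i j.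
Local Open Scope ring_scope.

Lemma common_offdiag_max : exists M,
  (forall i j, (i < n)%N -> (j < n)%N -> i != j -> a i j <= M /\ b i j <= M) /\
  exists i0 j0, [/\ (i0 < n)%N, (j0 < n)%N & a i0 j0 = M].
Proof.
have n_gt1 : (1 < n)%N by lia.
have [i0 [j0 [i0_lt j0_lt ij0 a_max]]] := offdiag_max_exists a n_gt1.
have [p0 [q0 [p0_lt q0_lt pq0 b_max]]] := offdiag_max_exists b n_gt1.
have step_eq k : (k.+1 < n)%N -> a k k.+1 = b k k.+1.
  by move=> k_lt; apply/adj_eq; [lia | lia | lia | exact: cycle_adj_succ].
(* If, say, max b < max a, then a = b < max a on the edges k k.+1, hence on
   all pairs by [ultrametric_path_lt]. *)
have max_ab : a i0 j0 = b p0 q0.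
  case: (ltgtP (a i0 j0) (b p0 q0)) => // [a_lt_b | b_lt_a].
  - suff : b p0 q0 < b p0 q0 by rewrite ltxx.
    apply: (ultrametric_path_lt b_ultra bC) p0_lt q0_lt pq0 => k k_lt.
    by rewrite -step_eq // (le_lt_trans _ a_lt_b) //; apply: a_max; lia.
  - suff : a i0 j0 < a i0 j0 by rewrite ltxx.
    apply: (ultrametric_path_lt a_ultra aC) i0_lt j0_lt ij0 => k k_lt.
    by rewrite step_eq // (le_lt_trans _ b_lt_a) //; apply: b_max; lia.
exists (a i0 j0); split; last by exists i0, j0.
by move=> i j i_lt j_lt ij; rewrite {2}max_ab; split; [exact: a_max | exact: b_max].
Qed.

Section BelowMax.
Variables (M : R) (i0 j0 : nat).
Hypothesis le_M :
  forall i j, (i < n)%N -> (j < n)%N -> i != j -> a i j <= M /\ b i j <= M.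
Hypotheses (i0_lt : (i0 < n)%N) (j0_lt : (j0 < n)%N) (a_i0j0 : a i0 j0 = M).

Let below i j := (a i j < M) && (b i j < M).

Lemma below_sym i j : below i j = below j i.
Proof. by rewrite /below aC bC. Qed.

Lemma below_trans i j k : below i j -> below j k -> below i k.
Proof.
move=> /andP[aij bij] /andP[ajk bjk].
by rewrite /below (ultrametric_lt_trans a_ultra aij ajk) (ultrametric_lt_trans b_ultra bij bjk).
Qed.

Lemma adj_below_maxE i j : (i < n)%N -> (j < n)%N -> i != j -> ~~ below i j ->
  cycle_adj n i j <-> ~~ (a i j < M) && ~~ (b i j < M).
Proof.
move=> i_lt j_lt ij not_both; have [aM bM] := le_M i_lt j_lt ij.
exact: iff_trans (adj_eq i_lt j_lt ij) (eq_below_maxE aM bM not_both).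
Qed.

Lemma below_class_module i v k : (i < n)%N -> (v < n)%N -> (k < n)%N ->
  ~~ below i v -> below i k -> cycle_adj n v k <-> cycle_adj n v i.
Proof.
move=> i_lt v_lt k_lt iv ik.
have vk : v != k by apply: contraNneq iv => ->.
have vi : v != i by apply: contraNneq iv => ->; apply: (below_trans ik); rewrite below_sym.
have not_vi : ~~ below v i by rewrite below_sym.
have not_vk : ~~ below v k.
  by apply: contra iv => vk_below; apply: (below_trans ik); rewrite below_sym.
have [aik bik] := andP ik.
have a_vk : (a v k < M) = (a v i < M).
  apply/idP/idP => [avk | avi]; last exact: ultrametric_lt_trans a_ultra avi aik.
  by apply: (ultrametric_lt_trans a_ultra avk); rewrite aC.
have b_vk : (b v k < M) = (b v i < M).
  apply/idP/idP => [bvk | bvi]; last exact: ultrametric_lt_trans b_ultra bvi bik.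
  by apply: (ultrametric_lt_trans b_ultra bvk); rewrite bC.
rewrite (adj_below_maxE v_lt k_lt vk not_vk) (adj_below_maxE v_lt i_lt vi not_vi).
by rewrite a_vk b_vk.
Qed.

(* The class of [i] under [below] would be a nontrivial module of the cycle. *)
Lemma no_pair_below_max i j : (i < n)%N -> (j < n)%N -> i != j -> ~~ below i j.
Proof.
move=> i_lt j_lt ij; apply/negP => ij_below.
have ii_below : below i i by apply: (below_trans ij_below); rewrite below_sym.
have [w w_lt iw] : exists2 w, (w < n)%N & ~~ below i w.
  have [i0_below | ] := boolP (below i i0); last by exists i0.
  have [j0_below | ] := boolP (below i j0); last by exists j0.
  have /andP[] : below i0 j0 by apply: (below_trans (j := i)) j0_below; rewrite below_sym.
  by rewrite a_i0j0 ltxx.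
have n_gt4 : (4 < n)%N by lia.
apply: (@cycle_module_trivial n n_gt4 (below i) i j w) => // v k v_lt k_lt.
exact: below_class_module.
Qed.

End BelowMax.

Lemma equal_ultrametrics_on_cycle_absurd : False.
Proof.
have [M [le_M [i0 [j0 [i0_lt j0_lt a_i0j0]]]]] := common_offdiag_max.
apply: (cycle_complement_not_two_clusters (A := fun i j => a i j < M)
  (B := fun i j => b i j < M) n57).
- by move=> i j /=; rewrite aC.
- by move=> i j /=; rewrite bC.
- by move=> j i k; exact: ultrametric_lt_trans a_ultra.
- by move=> j i k; exact: ultrametric_lt_trans b_ultra.
move=> i j i_lt j_lt ij; have not_both := no_pair_below_max le_M i0_lt j0_lt a_i0j0 i_lt j_lt ij.
by split=> //; exact: adj_below_maxE.
Qed.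

End EqualUltrametricsOnCycle.

Lemma has_induced_cycle_nat (V : finType) (L : V -> Prop) (E : V -> V -> Prop) l :
  1 < l -> has_induced_cycle L E l ->
  exists g : nat -> V, forall i j, i < l -> j < l -> i != j ->
    [/\ L (g i), L (g j), g i <> g j & E (g i) (g j) <-> cycle_adj l i j].
Proof.
case: l => // l l_gt1 [f [f_inj [f_L f_adj]]].
exists (fun k => f (inord k)) => i j i_lt j_lt ij.
have neq : inord i <> inord j :> 'I_l.+1.
  by move/(congr1 (@nat_of_ord _)); rewrite !inordK //; exact/eqP.
split=> //; first by move/f_inj.
by apply: iff_trans (f_adj _ _ neq) _; rewrite /= !inordK //; exact: cycle_adjE l_gt1 _ _.
Qed.

Theorem proposition3 (R : realType) (VT VS : finType)
  (oT : VT) (parT : VT -> VT) (oS : VS) (parS : VS -> VS)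
  (sigma : VT -> VS) (mu : VT -> VS + VS) (tauT : VT -> R) (tauS : VS -> R) :
  relaxed_scenario oT parT oS parS sigma mu tauT tauS ->
  (forall l, (l = 5 \/ 7 <= l) ->
     ~ has_induced_cycle (is_leaf oT parT)
         (edt_edge oT parT oS parS sigma tauT tauS) l) /\
  (forall l, odd l -> 3 < l ->
     ~ has_induced_cycle (is_leaf oT parT)
         (edt_edge oT parT oS parS sigma tauT tauS) l).
Proof.
move=> [[_ rootT _ _] [[_ rootS _ _] [timeT [timeS _]]]].
have [LT LT_lca] := lca_fun_exists rootT.
have [LS LS_lca] := lca_fun_exists rootS.
have no_hole l : l = 5 \/ 7 <= l ->
    ~ has_induced_cycle (is_leaf oT parT) (edt_edge oT parT oS parS sigma tauT tauS) l.
  move=> l57 /has_induced_cycle_nat[|g g_cycle]; first by lia.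
  apply: (@equal_ultrametrics_on_cycle_absurd R l (fun i j => tauT (LT (g i) (g j)))
    (fun i j => tauS (LS (sigma (g i)) (sigma (g j)))) l57).
  - by move=> i j k; exact: (lca_time_ultrametric timeT LT_lca (g i) (g j) (g k)).
  - by move=> i j k; exact: (lca_time_ultrametric timeS LS_lca (sigma (g i)) _ _).
  - by move=> i j; exact: (lca_time_comm timeT LT_lca (g i) (g j)).
  - by move=> i j; exact: (lca_time_comm timeS LS_lca (sigma (g i)) _).
  move=> i j i_lt j_lt ij; have [leaf_i leaf_j gij adj] := g_cycle i j i_lt j_lt ij.
  exact: iff_trans (iff_sym adj) (edt_edgeE _ _ timeT timeS LT_lca LS_lca leaf_i leaf_j gij).
split=> // l odd_l l_gt3; apply: no_hole.
by move: l odd_l l_gt3; do 7?[case=> //]; [left | right].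
Qed.
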